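(* Let $\tilde\alpha=(\tilde\alpha_1,\dots,\tilde\alpha_n)\in\mathbb{F}_{2^m}^n$ be a support tuple, let $t$ be a positive integer, and let $C\subseteq\mathbb{F}_2^n$ be a binary Goppa code. Consider the following procedure $\mathrm{GoppaGCD}(\tilde\alpha,t,C)$: (1) Set $\tilde g:=0$ and choose an $\mathbb{F}_2$-basis $B$ of $C$. (2) For each $c\in B$ in turn: set $\hat s_{c,\tilde\alpha}:=\sum_{i\in I_c}\prod_{j\in I_c\setminus\{i\}}(x-\tilde\alpha_j)$ and $\tilde g:=\gcd(\tilde g,\hat s_{c,\tilde\alpha})$; if $\deg(\tilde g)<2t$, return Fail. (3) For $i=1,\dots,n$: while $\tilde g(\tilde\alpha_i)=0$, replace $\tilde g$ by $\tilde g/(x-\tilde\alpha_i)$. (4) If $\deg(\tilde g)<2t$ return Fail; otherwise return $\tilde g$. Then this procedure terminates, and the following are equivalent: (a) $\mathrm{GoppaGCD}(\tilde\alpha,t,C)$ returns a degree-$u$ extension of $\tilde\alpha$ with respect to $C$ for some $u\ge 2t$; (b) $\tilde\alpha$ is degree-$u$ extendable with respect to $C$ for some $u\ge 2t$. Otherwise, the procedure returns Fail.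
   Context: $\mathbb{F}_{2^m}$ is the finite field with $2^m$ elements. A support tuple is $\tilde\alpha\in\mathbb{F}_{2^m}^n$ with pairwise distinct entries. For $c\in\mathbb{F}_2^n$, $I_c=\{i\mid c_i=1\}$. For a support tuple $\alpha$ and a polynomial $g\in\mathbb{F}_{2^m}[x]$ with $g(\alpha_i)\neq 0$ for all $i$ (a Goppa polynomial for $\alpha$), the binary Goppa code is $\Gamma(\alpha,g)=\{c\in\mathbb{F}_2^n\mid \sum_{i\in I_c}(x-\alpha_i)^{-1}=0\text{ in }\mathbb{F}_{2^m}[x]/\langle g\rangle\}$; equivalently $c\in\Gamma(\alpha,g)$ iff $g\mid \sum_{i\in I_c}\prod_{j\in I_c\setminus\{i\}}(x-\alpha_j)$. A binary Goppa code is a code of the form $\Gamma(\alpha,g)$. For $u\in\mathbb{N}_+$, a degree-$u$ extension of $\tilde\alpha$ with respect to $C$ is a Goppa polynomial $\tilde g$ for $\tilde\alpha$ with $\deg\tilde g=u$ and $C\subseteq\Gamma(\tilde\alpha,\tilde g)$; $\tilde\alpha$ is degree-$u$ extendable with respect to $C$ if such an extension exists. The gcd is taken as the monic gcd, with $\gcd(0,h)$ the monic associate of $h$. *)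

From HB Require Import structures.
From mathcomp Require Import all_boot all_order all_algebra all_field.
Set Implicit Arguments. Unset Strict Implicit. Unset Printing Implicit Defensive.
Import GRing.Theory.
Local Open Scope ring_scope.

Section Goppa.
Variables (F : fieldType) (n : nat).

Definition word := 'rV['F_2]_n.

Definition supp (c : word) : {set 'I_n} := [set i | c 0 i == 1].

Definition shat (alpha : 'I_n -> F) (c : word) : {poly F} :=
  \sum_(i in supp c) \prod_(j in supp c | j != i) ('X - (alpha j)%:P).

Definition goppa_poly (alpha : 'I_n -> F) (g : {poly F}) : Prop :=
  forall i, g.[alpha i] != 0.

Definition in_goppa (alpha : 'I_n -> F) (g : {poly F}) (c : word) : bool :=
  g %| shat alpha c.

Definition is_binary_goppa_code (C : {vspace word}) : Prop :=
  exists alpha0 : 'I_n -> F, injective alpha0 /\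
  exists g0 : {poly F}, goppa_poly alpha0 g0 /\
    forall c : word, (c \in C) = in_goppa alpha0 g0 c.

Definition extension (alpha : 'I_n -> F) (C : {vspace word}) (u : nat)
  (g : {poly F}) : Prop :=
  goppa_poly alpha g /\ (size g).-1 = u /\
  forall c : word, c \in C -> in_goppa alpha g c.

Definition extendable (alpha : 'I_n -> F) (C : {vspace word}) (u : nat) : Prop :=
  exists g, extension alpha C u g.

(* monic gcd; mgcd 0 h is the monic associate of h *)
Definition mgcd (p q : {poly F}) : {poly F} :=
  (lead_coef (gcdp p q))^-1 *: gcdp p q.

(* "deg g < 2t", valid for g = 0 under any convention for deg 0 since t > 0 *)
Definition deg_lt (g : {poly F}) (k : nat) : bool := (size g <= k)%N.

(* Step (2): loop over the basis, with early Fail (None) *)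
Fixpoint step2 (alpha : 'I_n -> F) (t : nat) (g : {poly F}) (B : seq word)
  : option {poly F} :=
  match B with
  | [::] => Some g
  | c :: B' =>
      let g' := mgcd g (shat alpha c) in
      if deg_lt g' (2 * t) then None else step2 alpha t g' B'
  end.

(* Step (3), single point: "while g(a) = 0, g := g / (x - a)".
   Big-step semantics: strip a g h iff the loop started on g terminates with h. *)
Inductive strip (a : F) : {poly F} -> {poly F} -> Prop :=
| strip_done g : g.[a] != 0 -> strip a g g
| strip_step g h : g.[a] == 0 -> strip a (g %/ ('X - a%:P)) h -> strip a g h.

Inductive strip_seq : seq F -> {poly F} -> {poly F} -> Prop :=
| strip_seq_nil g : strip_seq [::] g g
| strip_seq_cons a s g g1 h :
    strip a g g1 -> strip_seq s g1 h -> strip_seq (a :: s) g h.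

(* GoppaGCD(alpha, t, C) run with basis B terminates with result r
   (None = Fail, Some g = returns g) *)
Definition goppa_gcd_run (alpha : 'I_n -> F) (t : nat) (B : seq word)
  (r : option {poly F}) : Prop :=
  match step2 alpha t 0 B with
  | None => r = None
  | Some g =>
      exists g', strip_seq [seq alpha i | i <- enum 'I_n] g g' /\
        r = (if deg_lt g' (2 * t) then None else Some g')
  end.

End Goppa.

From HB Require Import structures.
From mathcomp Require Import all_boot all_order all_algebra all_field zify.
Set Implicit Arguments. Unset Strict Implicit. Unset Printing Implicit Defensive.
Import GRing.Theory.
Local Open Scope ring_scope.

(* Multiplying [shat alpha c] by the product of the [x - alpha_j], [j] outside
   [I_c], gives [\sum_(i in I_c) \prod_(j != i) (x - alpha_j)], which is additive
   in [c] in characteristic 2.  A Goppa polynomial [h] for [alpha] is coprime to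
   that product, so [Gamma(alpha, h)] is a subspace and [C \subseteq Gamma(alpha, h)]
   can be checked on the basis [B].  Hence an extension [h] divides every
   [shat alpha c], [c \in B], and so divides the gcd of step (2), whose degree
   therefore never drops below [deg h >= 2t].  Step (3) computes the largest
   divisor of that gcd without roots among the [alpha_i]: it is still divisible
   by [h], and being a Goppa polynomial that divides every [shat alpha c],
   [c \in B], it is itself an extension. *)

Lemma F2_cases (x : 'F_2) : x = 0 \/ x = 1.
Proof. by case: x => [[|[|//]]] ltx2; [left | right]; apply: val_inj. Qed.

Section GoppaLinearity.
Variables (F : fieldType) (n : nat) (alpha : 'I_n -> F).

Definition full_shat (c : word n) : {poly F} :=
  \sum_(i in supp c) \prod_(j | j != i) ('X - (alpha j)%:P).

Lemma shat_mul_prod_off_supp c :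
  shat alpha c * \prod_(j | j \notin supp c) ('X - (alpha j)%:P) = full_shat c.
Proof.
rewrite /shat /full_shat mulr_suml; apply: eq_bigr => i Ii.
rewrite [RHS](bigID (fun j => j \in supp c)) /=.
congr (_ * _); apply: eq_bigl => j; first by rewrite andbC.
by case: eqP => // ->; rewrite Ii.
Qed.

Lemma full_shat0 : full_shat 0 = 0.
Proof. by rewrite /full_shat big_pred0 // => i; rewrite inE mxE. Qed.

Lemma full_shatD c c' : 2 \in [pchar F] ->
  full_shat (c + c') = full_shat c + full_shat c'.
Proof.
move=> char2; have char2X : 2 \in [pchar {poly F}] by rewrite pchar_poly.
rewrite /full_shat !(big_mkcond (fun i => i \in supp _)) -big_split.
apply: eq_bigr => i _; rewrite !inE mxE.
by case: (F2_cases (c 0 i)) => ->; case: (F2_cases (c' 0 i)) => -> /=;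
  rewrite ?addr0 ?add0r // addrr_pchar2.
Qed.

Lemma in_goppa_full_shat h c : goppa_poly alpha h ->
  in_goppa alpha h c = (h %| full_shat c).
Proof.
move=> hP; rewrite /in_goppa -shat_mul_prod_off_supp Gauss_dvdpl //.
apply: (big_ind (coprimep h)) => [|p q hp hq|j _]; first exact: coprimep1.
  by rewrite coprimepMr hp.
by rewrite coprimep_XsubC; apply: hP.
Qed.

Lemma in_goppa_span h (B : seq (word n)) : 2 \in [pchar F] -> goppa_poly alpha h ->
  {in B, forall c, in_goppa alpha h c} -> {in <<B>>%VS, forall c, in_goppa alpha h c}.
Proof.
move=> char2 hP hB c cB; rewrite (@coord_span _ _ _ (in_tuple B) c cB).
rewrite in_goppa_full_shat //.
apply: (@big_ind _ (fun v : word n => h %| full_shat v)) => [|u v hu hv|i _].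
- by rewrite full_shat0 dvdp0.
- by rewrite full_shatD // dvdp_add.
case: (F2_cases (coord (in_tuple B) i c)) => ->.
  by rewrite scale0r full_shat0 dvdp0.
by rewrite scale1r -in_goppa_full_shat //; apply/hB/mem_nth.
Qed.

Lemma horner_shat c k : k \in supp c ->
  (shat alpha c).[alpha k] = \prod_(j in supp c | j != k) (alpha k - alpha j).
Proof.
move=> kc; rewrite horner_sum (bigD1 k kc) /= [X in _ + X]big1 => [|i /andP[_ ik]].
  by rewrite addr0 horner_prod; apply: eq_bigr => j _; rewrite !hornerE.
by rewrite horner_prod (bigD1 k) /= ?hornerE ?subrr ?mul0r // kc eq_sym.
Qed.

Lemma shat_neq0 c : injective alpha -> c != 0 -> shat alpha c != 0.
Proof.
move=> alpha_inj; apply: contra_neq => shat0; apply/rowP => k; rewrite mxE.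
case: (F2_cases (c 0 k)) => // ck1; have kc : k \in supp c by rewrite inE ck1.
have := horner_shat kc; rewrite shat0 horner0 => /esym/eqP/prodf_eq0[j /andP[_ jk]].
by rewrite subr_eq0 => /eqP/alpha_inj kj; rewrite kj eqxx in jk.
Qed.

End GoppaLinearity.

Section RootStripping.
Variable F : fieldType.

Definition rootfree_part (s : seq F) (g h : {poly F}) : Prop :=
  [/\ h %| g, {in s, forall a, ~~ root h a}
    & forall d, d %| g -> {in s, forall a, ~~ root d a} -> d %| h].

Lemma strip_rootfree_part a g h : strip a g h -> rootfree_part [:: a] g h.
Proof.
elim=> {g h} [g ga | g h ga _ [hg ha hmax]].
  by split=> [|b|d dg _ //]; [exact: dvdpp | rewrite mem_seq1 => /eqP->].
have gE : g %/ ('X - a%:P) * ('X - a%:P) = g by rewrite divpK // dvdp_XsubCl.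
split=> // [|d dg da]; first by apply: dvdp_trans hg _; rewrite -{2}gE dvdp_mulr.
apply: hmax => //; rewrite -(@Gauss_dvdpl _ _ ('X - a%:P)) ?gE //.
by rewrite coprimep_XsubC; apply: da; rewrite mem_head.
Qed.

Lemma strip_seq_rootfree_part s g h : strip_seq s g h -> rootfree_part s g h.
Proof.
elim=> {s g h} [g | a s g g1 h /strip_rootfree_part[g1g g1a g1max] _].
  by split=> [|//|d dg _ //]; apply: dvdpp.
move=> [hg1 hs hmax].
split=> [|b|d dg ds]; first exact: dvdp_trans hg1 g1g.
  rewrite inE => /predU1P[->|]; last exact: hs.
  by apply: contra (g1a a (mem_head _ _)); apply: root_dvdp.
apply: hmax => [|b bs]; last by apply: ds; rewrite inE bs orbT.
by apply: g1max => // b; rewrite inE => /eqP->; apply: ds; rewrite mem_head.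
Qed.

Lemma strip_mul_XsubC_exp (a : F) (q : {poly F}) k :
  ~~ root q a -> strip a (q * ('X - a%:P) ^+ k) q.
Proof.
move=> qa; elim: k => [|k IHk]; first by rewrite expr0 mulr1; apply: strip_done.
apply: strip_step; first by rewrite exprSr mulrA hornerM hornerXsubC subrr mulr0.
by rewrite exprSr mulrA mulpK ?polyXsubC_eq0.
Qed.

Lemma strip_total (a : F) (g : {poly F}) : g != 0 -> exists h, strip a g h.
Proof.
move=> g_neq0; case: (multiplicity_XsubC g a) => k [q].
by rewrite g_neq0 => qa ->; exists q; apply: strip_mul_XsubC_exp.
Qed.

Lemma strip_seq_total (s : seq F) (g : {poly F}) : g != 0 -> exists h, strip_seq s g h.
Proof.
elim: s g => [|a s IHs] g g_neq0; first by exists g; apply: strip_seq_nil.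
have [g1 gg1] := strip_total a g_neq0.
have [g1g _ _] := strip_rootfree_part gg1.
have [h g1h] := IHs g1 (dvdpN0 g1g g_neq0).
by exists h; apply: strip_seq_cons gg1 g1h.
Qed.

End RootStripping.

Section MonicGcd.
Variable F : fieldType.
Implicit Types p q h : {poly F}.

Lemma eqp_mgcd p q : mgcd p q %= gcdp p q.
Proof.
rewrite /mgcd; have [->|pq_neq0] := eqVneq (gcdp p q) 0; first by rewrite scaler0 eqpxx.
by rewrite eqp_scale // invr_eq0 lead_coef_eq0.
Qed.

Lemma dvdp_mgcd h p q : (h %| mgcd p q) = (h %| p) && (h %| q).
Proof. by rewrite (eqp_dvdr _ (eqp_mgcd p q)) dvdp_gcd. Qed.

Lemma mgcd_eq0 p q : (mgcd p q == 0) = (p == 0) && (q == 0).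
Proof. by rewrite -eqp0 (eqp_ltrans (eqp_mgcd p q)) eqp0 gcdp_eq0. Qed.

End MonicGcd.

Section GcdStep.
Variables (F : fieldType) (n : nat) (alpha : 'I_n -> F) (t : nat).

Lemma step2_dvdp (g : {poly F}) B g0 : step2 alpha t g B = Some g0 ->
  g0 %| g /\ {in B, forall c, g0 %| shat alpha c}.
Proof.
elim: B g => [|c B IHB] g /=; first by case=> <-; rewrite dvdpp.
case: ifP => // _ /IHB[g0g g0B]; move: g0g; rewrite dvdp_mgcd => /andP[g0g g0c].
by split=> // c'; rewrite inE => /predU1P[->|/g0B].
Qed.

Lemma step2_size (g : {poly F}) B g0 : step2 alpha t g B = Some g0 -> B != [::] ->
  (2 * t < size g0)%N.
Proof.
elim: B g => [|c B IHB] g //= + _; case: ifP => // /negbT g'_large.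
case: B IHB => [|c' B] IHB; last by move/IHB; apply.
by case=> <-; rewrite ltnNge.
Qed.

Lemma step2_Some (h g : {poly F}) B : (2 * t < size h)%N ->
  {in B, forall c, h %| shat alpha c} -> {in B, forall c, shat alpha c != 0} ->
  h %| g -> exists2 g0, step2 alpha t g B = Some g0 & h %| g0.
Proof.
move=> size_h; elim: B g => [|c B IHB] g hB B_neq0 hg /=; first by exists g.
have hg' : h %| mgcd g (shat alpha c) by rewrite dvdp_mgcd hg hB ?mem_head.
have g'_neq0 : mgcd g (shat alpha c) != 0.
  by rewrite mgcd_eq0 negb_and B_neq0 ?mem_head ?orbT.
rewrite /deg_lt leqNgt (leq_trans size_h (dvdp_leq g'_neq0 hg')) /=.
by apply: IHB hg' => c' c'B; [apply: hB | apply: B_neq0]; rewrite inE c'B orbT.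
Qed.

End GcdStep.

Section GoppaGCD.
Variables (F : fieldType) (n : nat) (alpha : 'I_n -> F) (t : nat).
Variables (C : {vspace word n}) (B : seq (word n)).
Hypothesis BC : basis_of C B.
Hypothesis C_neq0 : C != 0%VS.

Let points := [seq alpha i | i <- enum 'I_n].

Lemma goppa_poly_points h : goppa_poly alpha h <-> {in points, forall a, ~~ root h a}.
Proof.
split=> [hP _ /mapP[i _ ->] | hP i]; first exact: hP.
by apply: hP; rewrite map_f ?mem_enum.
Qed.

Lemma basis_neq_nil : B != [::].
Proof. by apply: contraNneq C_neq0 => B0; rewrite -(span_basis BC) B0 span_nil. Qed.

Lemma step2_basis_neq0 g0 : step2 alpha t 0 B = Some g0 -> g0 != 0.
Proof.
move=> g0E; rewrite -size_poly_gt0.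
exact: leq_ltn_trans (step2_size g0E basis_neq_nil).
Qed.

Lemma goppa_gcd_run_total : exists r, goppa_gcd_run alpha t B r.
Proof.
rewrite /goppa_gcd_run; case g0E: step2 => [g0|]; last by exists None.
have [g' g0g'] := strip_seq_total points (step2_basis_neq0 g0E).
by eexists; exists g'.
Qed.

Lemma goppa_gcd_run_extension g : 2 \in [pchar F] ->
  goppa_gcd_run alpha t B (Some g) ->
  (2 * t <= (size g).-1)%N /\ extension alpha C (size g).-1 g.
Proof.
move=> char2; rewrite /goppa_gcd_run; case g0E: step2 => [g0|] // [g' [g0g']].
case: ifP => // /negbT; rewrite /deg_lt -ltnNge => size_g' [->].
have [_ g0B] := step2_dvdp g0E.
have [g'g0 /goppa_poly_points g'P _] := strip_seq_rootfree_part g0g'.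
split; first by rewrite -ltnS prednK // (leq_ltn_trans _ size_g').
split=> //; split=> //; rewrite -(span_basis BC); apply: in_goppa_span => // c cB.
exact: dvdp_trans g'g0 (g0B c cB).
Qed.

Lemma goppa_gcd_run_Some r u : injective alpha -> (0 < t)%N -> (2 * t <= u)%N ->
  extendable alpha C u -> goppa_gcd_run alpha t B r -> exists g, r = Some g.
Proof.
move=> alpha_inj t_gt0 le2tu [h [hP [size_h hC]]].
have {le2tu}size_h : (2 * t < size h)%N by rewrite -size_h in le2tu; lia.
have hB : {in B, forall c, h %| shat alpha c} by move=> c /(basis_mem BC)/hC.
have B_neq0 : {in B, forall c, shat alpha c != 0}.
  by move=> c /(basis_not0 BC); apply: shat_neq0.
have [g0 g0E hg0] := step2_Some size_h hB B_neq0 (dvdp0 h).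
rewrite /goppa_gcd_run g0E => -[g' [g0g' ->]].
have [g'g0 _ g'max] := strip_seq_rootfree_part g0g'.
have hg' : h %| g' by apply: g'max => //; apply/goppa_poly_points.
have g'_neq0 : g' != 0 := dvdpN0 g'g0 (step2_basis_neq0 g0E).
rewrite /deg_lt leqNgt (leq_trans size_h (dvdp_leq g'_neq0 hg')) /=.
by exists g'.
Qed.

End GoppaGCD.

Theorem proposition6p8 (F : finFieldType) (m n : nat)
  (HF : #|F| = (2 ^ m)%N)
  (alpha : 'I_n -> F) (Halpha : injective alpha)
  (t : nat) (Ht : (0 < t)%N)
  (C : {vspace word n}) (HC : is_binary_goppa_code F C)
  (HC0 : C != 0%VS)
  (B : seq (word n)) (HB : basis_of C B) :
  (exists r, goppa_gcd_run alpha t B r) /\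
  forall r, goppa_gcd_run alpha t B r ->
    ((exists u g, (2 * t <= u)%N /\ r = Some g /\ extension alpha C u g) <->
     (exists u, (2 * t <= u)%N /\ extendable alpha C u)) /\
    (~ (exists u, (2 * t <= u)%N /\ extendable alpha C u) -> r = None).
Proof.
have char2 : 2 \in [pchar F] := card_finPcharP HF (isT : prime 2).
split=> [|r run]; first by have [r run] := goppa_gcd_run_total alpha t HB HC0; exists r.
have run_extension g : r = Some g -> exists2 u, (2 * t <= u)%N & extension alpha C u g.
  move=> rE; rewrite rE in run.
  by have [le2tu ext_g] := goppa_gcd_run_extension HB char2 run; exists (size g).-1.
split; first split.
- by case=> u [g [le2tu [_ ext_g]]]; exists u; split=> //; exists g.
- case=> u [le2tu ext]; have [g rE] := goppa_gcd_run_Some HB HC0 Halpha Ht le2tu ext run.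
  by have [u' le2tu' ext_g] := run_extension g rE; exists u', g.
- case: r run run_extension => // g _ /(_ g erefl)[u le2tu ext_g] no_ext.
  by case: no_ext; exists u; split=> //; exists g.
Qed.
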